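(* Let $f\colon X\to X$ be a piecewise $\lambda$-contraction and fix $x_0\in X$. Then $\omega(f,x)\subseteq\Omega(f)$ for every $x\in Z(f)$.
   Context: $(X,d)$ is a compact metric space whose open balls are connected, with $\mathrm{diam}(X)>0$, and $\lambda\in(0,1)$. A piecewise $\lambda$-contraction $f$: there exist $N\in\mathbb{N}$, open connected pairwise disjoint $A_1,\dots,A_N\subset X$ with dense union $X'$, and bi-Lipschitz $\varphi_i\colon X\to X$ with Lipschitz constant $\le\lambda$, $f|_{A_i}=\varphi_i|_{A_i}$; $S(f)=X\setminus X'$. $x$ is regular of order $n$ if $f^j(x)\notin S(f)$ for $0\le j<n$, regular if for all $n$; $Z(f)$ is the set of regular points. $\mathcal{I}_n(f)$ is the set of itineraries of order $n$, i.e. tuples $(i_0,\dots,i_{n-1})$ such that some regular point $x$ of order $n$ has $f^j(x)\in A_{i_j}$ for $0\le j<n$. For $\alpha=(i_0,\dots,i_{n-1})$, $\varphi^\alpha=\varphi_{i_{n-1}}\circ\cdots\circ\varphi_{i_0}$. $\Omega(f)=\bigcap_{m\ge1}\overline{\bigcup_{n\ge m}\{\varphi^\alpha(x_0):\alpha\in\mathcal{I}_n(f)\}}$. $\omega(f,x)=\bigcap_{m\ge1}\overline{\bigcup_{n\ge m}\{f^n(x)\}}$. *)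

From HB Require Import structures.
From mathcomp Require Import all_boot all_order all_algebra.
From mathcomp Require Import all_classical all_reals all_analysis.
Set Implicit Arguments. Unset Strict Implicit. Unset Printing Implicit Defensive.
Import Order.TTheory GRing.Theory Num.Theory.
Local Open Scope classical_set_scope.
Local Open Scope ring_scope.

Section PiecewiseContraction.
Context {R : realType} {X : metricType R} {N : nat}.
Variables (A : 'I_N -> set X) (phi : 'I_N -> X -> X) (f : X -> X).

Definition Xprime : set X := \bigcup_(i in [set: 'I_N]) A i.
Definition Sing : set X := ~` Xprime.

Definition piecewise_contraction (lam : R) : Prop :=
  [/\ (forall i, open (A i) /\ connected (A i)),
      (forall i j, i != j -> A i `&` A j = set0),
      closure Xprime = setT,
      (forall i, exists2 c : R, 0 < c &
         forall x y, c * mdist x y <= mdist (phi i x) (phi i y)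
                     /\ mdist (phi i x) (phi i y) <= lam * mdist x y) &
      (forall i x, A i x -> f x = phi i x)].

Definition regular_of_order (n : nat) (x : X) : Prop :=
  forall j, (j < n)%N -> ~ Sing (iter j f x).

Definition Zreg : set X := [set x | forall n, regular_of_order n x].

Definition itineraries (n : nat) : set (n.-tuple 'I_N) :=
  [set a | exists x, regular_of_order n x /\
           forall j : 'I_n, A (tnth a j) (iter j f x)].

Arguments itineraries n : clear implicits.

Definition phi_itin (s : seq 'I_N) (x : X) : X :=
  foldl (fun y i => phi i y) x s.

Definition Omega (x0 : X) : set X :=
  \bigcap_(m in [set m : nat | (1 <= m)%N])
    closure (\bigcup_(n in [set n : nat | (m <= n)%N])
               ((fun a : n.-tuple 'I_N => phi_itin (tval a) x0) @` itineraries n)).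

Definition omega_lim (x : X) : set X :=
  \bigcap_(m in [set m : nat | (1 <= m)%N])
    closure (\bigcup_(n in [set n : nat | (m <= n)%N]) [set iter n f x]).

End PiecewiseContraction.

(* The orbit of a regular point x follows the itinerary alpha_n = (i_0, ..., i_{n-1})
   of its first n steps, so f^n(x) = phi^{alpha_n}(x) with alpha_n in I_n(f).  As
   phi^{alpha_n} is lambda^n-Lipschitz, f^n(x) lies within lambda^n d(x, x0) of
   phi^{alpha_n}(x0), a point of the n-th set in the definition of Omega(f).  This
   distance tends to 0, so accumulation points of the orbit are accumulation points
   of these sets. *)

From HB Require Import structures.
From mathcomp Require Import all_boot all_order all_algebra.
From mathcomp Require Import all_classical all_reals all_analysis.
Set Implicit Arguments. Unset Strict Implicit. Unset Printing Implicit Defensive.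
Import Order.TTheory GRing.Theory Num.Theory.
Local Open Scope classical_set_scope.
Local Open Scope ring_scope.

Section LimitSet.
Context {R : realType} {X : metricType R}.

(* Both [omega_lim f x] and [Omega A phi f x0] unfold to a [limit_set]. *)
Definition limit_set (B : nat -> set X) : set X :=
  \bigcap_(m in [set m : nat | (1 <= m)%N])
    closure (\bigcup_(n in [set n : nat | (m <= n)%N]) B n).

Lemma limit_set_approx (B C : nat -> set X) (r : nat -> R) :
  r n @[n --> \oo] --> (0 : R^o) ->
  (forall n c, C n c -> exists2 b, B n b & mdist c b <= r n) ->
  limit_set C `<=` limit_set B.
Proof.
move=> r0 approx y yC m /= m1 U /nbhs_ballP [e /= e0 eU].
have e20 : 0 < e / 2 by rewrite divr_gt0.
have [K _ rK] := @cvgr_lt _ _ _ _ _ _ r0 _ e20.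
have [c [[n /= mKn Cnc] yc]] :=
  yC (maxn m K) (leq_trans m1 (leq_maxl _ _)) _ (nbhsx_ballx y _ e20).
have [b Bnb cb] := approx n _ Cnc.
exists b; split; first by exists n => //; exact: leq_trans (leq_maxl _ _) mKn.
apply: eU; rewrite [e]splitr; apply: (ball_triangle yc).
rewrite ballEmdist /=; apply: le_lt_trans cb _.
by apply: rK; exact: leq_trans (leq_maxr _ _) mKn.
Qed.

End LimitSet.

Section Itineraries.
Context {R : realType} {X : metricType R} {N : nat}.
Variables (A : 'I_N -> set X) (phi : 'I_N -> X -> X) (f : X -> X).

Lemma mdist_phi_itin (lam : R) : 0 <= lam ->
  (forall i x y, mdist (phi i x) (phi i y) <= lam * mdist x y) ->
  forall s x y,
    mdist (phi_itin phi s x) (phi_itin phi s y) <= lam ^+ size s * mdist x y.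
Proof.
move=> lam0 phi_lip; elim=> [|i s IH] x y /=; first by rewrite expr0 mul1r.
apply: le_trans (IH _ _) _.
by rewrite exprSr -mulrA ler_wpM2l ?exprn_ge0.
Qed.

Lemma Zreg_itinerary x : Zreg A f x ->
  exists idx : nat -> 'I_N, forall j, A (idx j) (iter j f x).
Proof.
move=> xZ.
have visits j : exists i, A i (iter j f x).
  by have /contrapT [i _ Ai] := xZ j.+1 j (ltnSn j); exists i.
by have [idx ?] := choice visits; exists idx.
Qed.

Variables (x : X) (idx : nat -> 'I_N).
Hypothesis orbit_idx : forall j, A (idx j) (iter j f x).

Lemma iter_phi_itin : (forall i y, A i y -> f y = phi i y) ->
  forall n, iter n f x = phi_itin phi (map idx (iota 0 n)) x.
Proof.
move=> fA; elim=> [|n IH] //.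
rewrite -addn1 iotaD map_cat /phi_itin foldl_cat /= -/(phi_itin _ _ _) -IH.
by rewrite add0n addn1 iterS (fA _ _ (orbit_idx n)).
Qed.

Lemma itineraries_orbit (n : nat) : Zreg A f x ->
  itineraries A f [tuple of map idx (iota 0 n)].
Proof.
move=> xZ; exists x; split=> [|j]; first exact: xZ.
rewrite (tnth_nth (idx 0%N)) /= (nth_map 0%N) ?size_iota //.
by rewrite nth_iota // add0n.
Qed.

End Itineraries.

Theorem lemma3p2 (R : realType) (X : metricType R)
  (hcompact : compact [set: X])
  (hballs : forall (x : X) (r : R), 0 < r -> connected (ball x r))
  (hdiam : exists x y : X, 0 < mdist x y)
  (lam : R) (hlam : 0 < lam < 1)
  (N : nat) (A : 'I_N -> set X) (phi : 'I_N -> X -> X) (f : X -> X)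
  (hf : piecewise_contraction A phi f lam)
  (x0 : X) :
  forall x, Zreg A f x -> omega_lim f x `<=` Omega A phi f x0.
Proof.
move=> x xZ.
case: hf => _ _ _ phi_bilip fA.
have phi_lip i y z : mdist (phi i y) (phi i z) <= lam * mdist y z.
  by have [c _ /(_ y z) []] := phi_bilip i.
have /andP [lam0 lam1] := hlam.
have [idx orbit_idx] := Zreg_itinerary xZ.
apply: (@limit_set_approx _ _ _ (fun n => [set iter n f x])
          (fun n => lam ^+ n * mdist x x0)).
  rewrite -(mul0r (mdist x x0)); apply: cvgMr_tmp; apply: cvg_expr.
  by rewrite ger0_norm ?ltW.
move=> n _ ->; exists (phi_itin phi (map idx (iota 0 n)) x0).
  by exists [tuple of map idx (iota 0 n)] => //; exact: itineraries_orbit.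
rewrite (iter_phi_itin orbit_idx fA).
by have := mdist_phi_itin (ltW lam0) phi_lip (map idx (iota 0 n)) x x0;
  rewrite size_map size_iota.
Qed.
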